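(* For integer $T\ge1$, $$\lim_{T\to\infty}\frac{2T-G(1/T,T)}{2T}=\frac{3e-2}{2(e^2+e+1)}\approx0.2771.$$
   Context: For $p\in(0,1)$, $T\in\mathbb{N}^+$ and $q=1-p$, define $$G(p,T)=\frac{2T+q^{2T-1}\big[\frac{2}{p}-(\frac{p}{2}-2)(T-1)\big]+q^{T-1}\big(2-\frac{2}{p}-\frac{p}{2}-\frac{Tp}{2}+T^2p\big)}{q^{2T-1}+q^{T-1}(T-1)p+Tp}.$$ This is the average peak AoI of the discrete-time Geo-D dual-queue system: one zero-wait sensor with geometric service time of parameter $p$ and one with deterministic service time $T$ slots. The value $2T=2/\mu$ is the average peak AoI of either single queue (geometric or deterministic) with service rate $\mu=1/T$. The expression inside the limit is therefore the relative average peak AoI reduction when both sensors have service rate $\mu=1/T$. *)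

From Stdlib Require Import Reals.
From Coquelicot Require Import Coquelicot.
Open Scope R_scope.

(* G(p,T): average peak AoI of the Geo-D dual-queue system, with q = 1 - p.
   T is a positive integer (given as a nat, cast with INR); powers use nat exponents. *)
Definition G (p : R) (T : nat) : R :=
  let q := 1 - p in
  let t := INR T in
  (2 * t
   + q ^ (2 * T - 1) * (2 / p - (p / 2 - 2) * (t - 1))
   + q ^ (T - 1) * (2 - 2 / p - p / 2 - t * p / 2 + t ^ 2 * p))
  / (q ^ (2 * T - 1) + q ^ (T - 1) * (t - 1) * p + t * p).

Definition rel_reduction (T : nat) : R :=
  (2 * INR T - G (1 / INR T) T) / (2 * INR T).

(* With p = 1/T and u = (1-p)^(T-1), the quantity (2T - G(p,T))/(2T) is a fixed
   rational function of (u, p), continuous at (1/e, 0).  As T grows, p -> 0 and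
   u -> 1/e, squeezed between the two bounds 1 + x <= e^x applied to x = -p and
   to x = 1/(T-1); evaluating the rational function at (1/e, 0) gives the limit. *)
From Stdlib Require Import Reals Lra Lia.
From Coquelicot Require Import Coquelicot.
Open Scope R_scope.

Lemma exp_mult_INR (n : nat) (x : R) : exp (INR n * x) = exp x ^ n.
Proof.
  rewrite <- Rpower_pow by apply exp_pos.
  unfold Rpower; rewrite ln_exp; reflexivity.
Qed.

Lemma pow_one_add_le_exp (n : nat) (x : R) :
  0 <= 1 + x -> (1 + x) ^ n <= exp (INR n * x).
Proof.
  intro Hx; rewrite exp_mult_INR.
  apply pow_incr; split; [exact Hx | apply exp_ineq1_le].
Qed.

Lemma exp_le_pow_inv_one_add (n : nat) (x : R) :
  0 <= x -> exp (- (INR n * x)) <= (/ (1 + x)) ^ n.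
Proof.
  intro Hx; rewrite exp_Ropp, pow_inv.
  apply Rinv_le_contravar; [apply pow_lt; lra|].
  apply pow_one_add_le_exp; lra.
Qed.

Lemma is_lim_seq_inv_INR_S : is_lim_seq (fun n => / INR (S n)) 0.
Proof.
  assert (HS : is_lim_seq (fun n => INR (S n)) p_infty).
  { apply (is_lim_seq_incr_1 INR p_infty), is_lim_seq_INR. }
  exact (is_lim_seq_inv _ _ HS ltac:(discriminate)).
Qed.

Lemma is_lim_seq_pow_one_sub_inv_INR_S :
  is_lim_seq (fun n => (1 - / INR (S n)) ^ n) (exp (-1)).
Proof.
  apply is_lim_seq_le_le_loc with
    (u := fun _ => exp (-1)) (w := fun n => exp (- (1 - / INR (S n)))).
  - exists 1%nat; intros n Hn.
    assert (Hn0 : 0 < INR n) by (apply lt_0_INR; lia).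
    rewrite S_INR; split.
    + replace (1 - / (INR n + 1)) with (/ (1 + / INR n)) by (field; lra).
      replace (-1) with (- (INR n * / INR n)) by (field; lra).
      apply exp_le_pow_inv_one_add, Rlt_le, Rinv_0_lt_compat, Hn0.
    + replace (- (1 - / (INR n + 1))) with (INR n * - / (INR n + 1)) by (field; lra).
      replace (1 - / (INR n + 1)) with (1 + - / (INR n + 1)) by ring.
      apply pow_one_add_le_exp.
      assert (Hle : / (INR n + 1) <= 1) by (rewrite <- Rinv_1; apply Rinv_le_contravar; lra).
      lra.
  - apply is_lim_seq_const.
  - replace (-1) with (- (1 - 0)) by ring.
    apply (is_lim_seq_continuous (fun y => exp (- (1 - y)))).
    + apply derivable_continuous_pt; auto_derive; trivial.
    + exact is_lim_seq_inv_INR_S.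
Qed.

(* 1 - p G(p,T) / 2 with T = 1/p, expressed in u = (1-p)^(T-1) and p. *)
Definition reduction_profile (u p : R) : R :=
  1 - (2 + u * u * (1 - p) * (4 - 2 * p - (1 - p) * p / 2) + u * (3 * p / 2 - 1 - p * p / 2))
      / (2 * (u * u * (1 - p) + u * (1 - p) + 1)).

Lemma rel_reduction_eq (n : nat) :
  let p := / INR (S n) in rel_reduction (S n) = reduction_profile ((1 - p) ^ n) p.
Proof.
  intro p; unfold rel_reduction, G, reduction_profile.
  replace (2 * S n - 1)%nat with (n + n + 1)%nat by lia.
  replace (S n - 1)%nat with n by lia.
  assert (Hp : 0 < p <= 1).
  { split; [apply Rinv_0_lt_compat, lt_0_INR; lia|].
    rewrite <- Rinv_1; apply Rinv_le_contravar; [lra|].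
    rewrite S_INR; pose proof (pos_INR n); lra. }
  assert (HT : INR (S n) = / p) by (unfold p; rewrite Rinv_inv; reflexivity).
  rewrite HT, !pow_add.
  replace (1 - 1 / / p) with (1 - p) by (field; lra).
  set (u := (1 - p) ^ n).
  assert (Hu : 0 <= u) by (apply pow_le; lra).
  assert (Hden : 0 < u * u * (1 - p) + u * (1 - p) + 1) by nra.
  field; repeat split; lra.
Qed.

Lemma is_lim_seq_reduction_profile (u p : nat -> R) (lu lp : R) :
  is_lim_seq u lu -> is_lim_seq p lp ->
  lu * lu * (1 - lp) + lu * (1 - lp) + 1 <> 0 ->
  is_lim_seq (fun n => reduction_profile (u n) (p n)) (reduction_profile lu lp).
Proof.
  intros Hu Hp Hden; unfold reduction_profile.
  repeat first [ assumption | apply is_lim_seq_const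
    | apply is_lim_seq_minus' | apply is_lim_seq_plus'
    | apply is_lim_seq_div' | apply is_lim_seq_mult' ].
  all: match goal with
       | |- 2 * _ <> 0 => apply Rmult_integral_contrapositive_currified; [discrR | exact Hden]
       | |- _ => discrR
       end.
Qed.

Theorem mainTheorem7 :
  is_lim_seq (fun n : nat => rel_reduction (S n))
    (Finite ((3 * exp 1 - 2) / (2 * (exp 1 ^ 2 + exp 1 + 1)))).
Proof.
  assert (He : exp (-1) = / exp 1) by (rewrite <- exp_Ropp; f_equal; ring).
  pose proof (exp_pos 1) as He_pos.
  replace ((3 * exp 1 - 2) / (2 * (exp 1 ^ 2 + exp 1 + 1)))
    with (reduction_profile (exp (-1)) 0)
    by (rewrite He; unfold reduction_profile; field; split; nra).
  apply is_lim_seq_ext with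
    (u := fun n => reduction_profile ((1 - / INR (S n)) ^ n) (/ INR (S n))).
  { intro n; symmetry; apply rel_reduction_eq. }
  apply is_lim_seq_reduction_profile.
  - exact is_lim_seq_pow_one_sub_inv_INR_S.
  - exact is_lim_seq_inv_INR_S.
  - rewrite He; pose proof (Rinv_0_lt_compat _ He_pos); nra.
Qed.
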